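(* Let $\mathscr{G}$ be a principal homogeneous groupoid with vertex set $\Lambda$ (exactly one arrow $[a,b]$ from $a$ to $b$ for all $a,b\in\Lambda$), endowed with a pre-braiding $\sigma$, and let $\langle\cdot,\cdot,\cdot\rangle$ be the ternary operation on $\Lambda$ defined by $\sigma([a,b]|[b,c])=[a,\langle a,b,c\rangle]|[\langle a,b,c\rangle,c]$. Then: (i) for all $a,b$, the map $\langle a,b,\cdot\rangle\colon\Lambda\to\Lambda$ is invertible with inverse $\langle b,a,\cdot\rangle$; (ii) for all $b,c$, the map $\langle\cdot,b,c\rangle$ is invertible with inverse $\langle\cdot,c,b\rangle$; (iii) if moreover $\sigma$ is involutive, then $\langle\cdot,b,c\rangle$ also has inverse $\langle b,c,\cdot\rangle$, and hence $\langle c,b,\cdot\rangle=\langle\cdot,b,c\rangle$.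
   Context: For a groupoid $\mathscr{G}$ with vertices $\Lambda$, multiplication $m$ on composable pairs and units $\mathbf{1}_\lambda$, a pre-braiding is a source/target-preserving map $\sigma(x,y)=(x\rightharpoonup y,x\leftharpoonup y)$ on composable pairs such that for all composable $x|y|z$: $\sigma(x,\mathbf{1}_{\mathfrak{t}(x)})=(\mathbf{1}_{\mathfrak{s}(x)},x)$; $\sigma(\mathbf{1}_{\mathfrak{s}(x)},x)=(x,\mathbf{1}_{\mathfrak{t}(x)})$; $x\rightharpoonup yz=(x\rightharpoonup y)((x\leftharpoonup y)\rightharpoonup z)$ and $x\leftharpoonup yz=(x\leftharpoonup y)\leftharpoonup z$; $xy\leftharpoonup z=(x\leftharpoonup(y\rightharpoonup z))(y\leftharpoonup z)$ and $xy\rightharpoonup z=x\rightharpoonup(y\rightharpoonup z)$; $m\circ\sigma=m$. Involutive means $\sigma^2=\mathrm{id}$. In a PH groupoid, $[a,b][b,c]=[a,c]$. *)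

Set Implicit Arguments.

(* The principal homogeneous (PH) groupoid on a vertex set L:
   exactly one arrow [a,b] from a to b, represented as the pair (a,b). *)
Definition arr (L : Type) : Type := (L * L)%type.
Definition arrow {L : Type} (a b : L) : arr L := (a, b).
Definition src {L : Type} (x : arr L) : L := fst x.
Definition tgt {L : Type} (x : arr L) : L := snd x.
Definition unit_arr {L : Type} (l : L) : arr L := (l, l).
(* multiplication (meaningful on composable pairs x|y, i.e. tgt x = src y):
   [a,b][b,c] = [a,c] *)
Definition mul {L : Type} (x y : arr L) : arr L := (src x, tgt y).
Definition composable {L : Type} (x y : arr L) : Prop := tgt x = src y.

(* A map on composable pairs, given as a total function whose behaviour only
   matters on composable pairs. *)
Definition lact {L : Type} (sigma : arr L -> arr L -> arr L * arr L)
  (x y : arr L) : arr L := fst (sigma x y).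
Definition ract {L : Type} (sigma : arr L -> arr L -> arr L * arr L)
  (x y : arr L) : arr L := snd (sigma x y).

Definition pre_braiding {L : Type} (sigma : arr L -> arr L -> arr L * arr L) : Prop :=
  (forall x y, composable x y ->
      composable (lact sigma x y) (ract sigma x y)
      /\ src (lact sigma x y) = src x
      /\ tgt (ract sigma x y) = tgt y)
  /\ (forall x, sigma x (unit_arr (tgt x)) = (unit_arr (src x), x))
  /\ (forall x, sigma (unit_arr (src x)) x = (x, unit_arr (tgt x)))
  /\ (forall x y z, composable x y -> composable y z ->
        lact sigma x (mul y z)
          = mul (lact sigma x y) (lact sigma (ract sigma x y) z)
        /\ ract sigma x (mul y z) = ract sigma (ract sigma x y) z)
  /\ (forall x y z, composable x y -> composable y z ->
        ract sigma (mul x y) z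
          = mul (ract sigma x (lact sigma y z)) (ract sigma y z)
        /\ lact sigma (mul x y) z = lact sigma x (lact sigma y z))
  /\ (forall x y, composable x y ->
        mul (lact sigma x y) (ract sigma x y) = mul x y).

Definition involutive {L : Type} (sigma : arr L -> arr L -> arr L * arr L) : Prop :=
  forall x y, composable x y ->
    sigma (lact sigma x y) (ract sigma x y) = (x, y).

Definition tern {L : Type} (sigma : arr L -> arr L -> arr L * arr L)
  (a b c : L) : L := tgt (lact sigma (arrow a b) (arrow b c)).

(** Since [σ] preserves sources and targets, [σ([a,b]|[b,c])] is determined by
    the single vertex [⟨a,b,c⟩], and each pre-braiding axiom evaluated on
    arrows of the PH groupoid becomes an identity between ternary operations.
    Applying [xy ⇀ z = x ⇀ (y ⇀ z)] to [[b,a]|[a,b]|[b,c]] and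
    [x ↼ yz = (x ↼ y) ↼ z] to [[a,b]|[b,c]|[c,b]], where the products collapse
    to units, gives the two cancellation laws (i) and (ii); involutivity gives
    [⟨a,⟨a,b,c⟩,c⟩ = b], and (iii) follows by combining it with (i) and (ii). *)

Section PreBraidedPHGroupoid.

Variables (L : Type) (sigma : arr L -> arr L -> arr L * arr L).
Hypothesis sigma_pre_braiding : pre_braiding sigma.

Lemma sigma_arrows (a b c : L) :
  sigma (arrow a b) (arrow b c)
  = (arrow a (tern sigma a b c), arrow (tern sigma a b c) c).
Proof.
  destruct sigma_pre_braiding as [Hst _].
  destruct (Hst (arrow a b) (arrow b c) eq_refl) as (Hcomp & Hsrc & Htgt).
  unfold tern, lact, ract, composable, arrow, src, tgt in *; simpl in *.
  destruct (sigma (a, b) (b, c)) as [[p q] [r s]]; simpl in *; subst.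
  reflexivity.
Qed.

Lemma lact_arrows (a b c : L) :
  lact sigma (arrow a b) (arrow b c) = arrow a (tern sigma a b c).
Proof. unfold lact; rewrite sigma_arrows; reflexivity. Qed.

Lemma ract_arrows (a b c : L) :
  ract sigma (arrow a b) (arrow b c) = arrow (tern sigma a b c) c.
Proof. unfold ract; rewrite sigma_arrows; reflexivity. Qed.

Lemma ternKl (a b c : L) : tern sigma b a (tern sigma a b c) = c.
Proof.
  destruct sigma_pre_braiding as (_ & _ & Hunit_l & _ & Hmul_lact & _).
  destruct (Hmul_lact (arrow b a) (arrow a b) (arrow b c) eq_refl eq_refl)
    as [_ E].
  change (mul (arrow b a) (arrow a b)) with (unit_arr (src (arrow b c))) in E.
  unfold lact at 1 in E; rewrite Hunit_l, !lact_arrows in E.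
  symmetry; exact (f_equal tgt E).
Qed.

Lemma ternKr (a b c : L) : tern sigma (tern sigma a b c) c b = a.
Proof.
  destruct sigma_pre_braiding as (_ & Hunit_r & _ & Hract_mul & _).
  destruct (Hract_mul (arrow a b) (arrow b c) (arrow c b) eq_refl eq_refl)
    as [_ E].
  change (mul (arrow b c) (arrow c b)) with (unit_arr (tgt (arrow a b))) in E.
  unfold ract at 1 in E; rewrite Hunit_r, !ract_arrows in E.
  symmetry; exact (f_equal src E).
Qed.

Hypothesis sigma_involutive : involutive sigma.

Lemma tern_middle (a b c : L) : tern sigma a (tern sigma a b c) c = b.
Proof.
  pose proof (sigma_involutive (arrow a b) (arrow b c) eq_refl) as E.
  rewrite lact_arrows, ract_arrows, sigma_arrows in E.
  exact (f_equal (fun p => tgt (fst p)) E).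
Qed.

Lemma tern_rotate (a b c : L) : tern sigma b c (tern sigma a b c) = a.
Proof.
  pose proof (ternKr a (tern sigma a b c) c) as E.
  rewrite tern_middle in E; exact E.
Qed.

Lemma tern_reverse (a b c : L) : tern sigma c b a = tern sigma a b c.
Proof.
  pose proof (ternKl b c (tern sigma a b c)) as E.
  rewrite tern_rotate in E; exact E.
Qed.

End PreBraidedPHGroupoid.

Theorem lemma7p11 (L : Type) (sigma : arr L -> arr L -> arr L * arr L) :
  pre_braiding sigma ->
  (* (i) <a,b,.> is invertible with inverse <b,a,.> *)
  (forall a b : L,
     (forall c, tern sigma b a (tern sigma a b c) = c) /\
     (forall c, tern sigma a b (tern sigma b a c) = c)) /\
  (* (ii) <.,b,c> is invertible with inverse <.,c,b> *)
  (forall b c : L,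
     (forall a, tern sigma (tern sigma a b c) c b = a) /\
     (forall a, tern sigma (tern sigma a c b) b c = a)) /\
  (* (iii) if sigma is involutive, <.,b,c> has inverse <b,c,.>,
     hence <c,b,.> = <.,b,c> *)
  (involutive sigma ->
     forall b c : L,
       (forall a, tern sigma b c (tern sigma a b c) = a) /\
       (forall a, tern sigma (tern sigma b c a) b c = a) /\
       (forall a, tern sigma c b a = tern sigma a b c)).
Proof.
  intros Hpre.
  split; [| split].
  - intros a b; split; intros c; apply (ternKl _ _ Hpre).
  - intros b c; split; intros a; apply (ternKr _ _ Hpre).
  - intros Hinv b c; split; [| split]; intros a.
    + apply (tern_rotate _ _ Hpre Hinv).
    + rewrite <- (tern_reverse _ _ Hpre Hinv). apply (ternKl _ _ Hpre).
    + apply (tern_reverse _ _ Hpre Hinv).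
Qed.
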